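(* Let $\mathcal A\subseteq\mathbb T$, let $\Phi:\mathcal A\to\mathcal A$ be a function, and let $\boldsymbol\alpha$ be a ratio set. Assume: (a) if $\boldsymbol\alpha$ witnesses $S\in\mathcal A$, then $\boldsymbol\alpha$ witnesses $\Phi(S)$; (b) if $S,T\in\mathcal A$ and $\boldsymbol\alpha$ witnesses $S-T$, then $\boldsymbol\alpha$ witnesses $\Phi(S)-\Phi(T)$ and $S-T\succ^{\boldsymbol\alpha}\Phi(S)-\Phi(T)$; (c) if $T_j\in\mathcal A$ ($j=1,2,\dots$) and $T_j$ converges $\boldsymbol\alpha$-geometrically to $T$, then $T\in\mathcal A$; (d) there exists $T_0\in\mathcal A$ such that $\boldsymbol\alpha$ witnesses both $T_0$ and $\Phi(T_0)-T_0$. Then there is $S\in\mathcal A$ with $S=\Phi(S)$.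
   Context: $\mathbb T$ is the field of real grid-based transseries over the ordered group $\mathfrak G$ of transmonomials; $\operatorname{mag}T$ is the dominant monomial of $T\neq0$. A ratio set is a finite $\boldsymbol\alpha\subset\{\mathfrak g\in\mathfrak G:\mathfrak g\prec1\}$; $\boldsymbol\alpha^*$ (resp. $\boldsymbol\alpha^+$) is the set of products of zero or more (resp. one or more) elements of $\boldsymbol\alpha$. For monomials $\mathfrak m\prec^{\boldsymbol\alpha}\mathfrak n$ iff $\mathfrak m/\mathfrak n\in\boldsymbol\alpha^+$; for transseries $A\prec^{\boldsymbol\alpha}B$ (equivalently $B\succ^{\boldsymbol\alpha}A$) iff every $\mathfrak a\in\operatorname{supp}A$ satisfies $\mathfrak a\prec^{\boldsymbol\alpha}\mathfrak b$ for some $\mathfrak b\in\operatorname{supp}B$. $\boldsymbol\alpha$ witnesses a nonzero $T$ iff $\operatorname{supp}T\subseteq(\operatorname{mag}T)\boldsymbol\alpha^*$. A sequence $T_j$ converges $\boldsymbol\alpha$-geometrically to $T$ if for all $j$, $\boldsymbol\alpha$ witnesses $T-T_j$ and $T-T_j\succ^{\boldsymbol\alpha}T-T_{j+1}$. *)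

From mathcomp Require Import all_boot all_order all_algebra.
From mathcomp Require Import reals.
Set Implicit Arguments. Unset Strict Implicit. Unset Printing Implicit Defensive.
Import Order.TTheory GRing.Theory Num.Theory.
Local Open Scope ring_scope.

(* The group of monomials is written ADDITIVELY: the product m*n of monomials
   is m + n, the quotient m/n is m - n, the unit monomial 1 is 0.
   [le] is the (total, translation-invariant) order of the monomial group;
   [le m n] means m ≼ n. *)
Record ordered_group (G : zmodType) (le : rel G) : Prop := {
  og_refl  : forall x, le x x;
  og_anti  : forall x y, le x y -> le y x -> x = y;
  og_trans : forall x y z, le x y -> le y z -> le x z;
  og_total : forall x y, le x y || le y x;
  og_add   : forall x y z, le x y -> le (x + z) (y + z) }.

Section Transseries.
Variables (G : zmodType) (le : rel G) (R : realType).

Definition mlt (m n : G) : bool := le m n && (m != n).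
Definition small (m : G) : bool := mlt m 0.

Definition supp (T : G -> R) : G -> Prop := fun g => T g != 0.

Definition gstar (s : seq G) (g : G) : Prop :=
  exists k : seq G, all (fun x => x \in s) k /\ g = \sum_(x <- k) x.
Definition gplus (s : seq G) (g : G) : Prop :=
  exists k : seq G, k != [::] /\ all (fun x => x \in s) k /\ g = \sum_(x <- k) x.

Definition grid_based (T : G -> R) : Prop :=
  exists (J mu : seq G), all small mu /\
    forall g, supp T g -> exists j, j \in J /\ exists p, gstar mu p /\ g = j + p.

Definition transseries (T : G -> R) : Prop := grid_based T.

Definition ratio_set (alpha : seq G) : Prop := all small alpha.

Definition alpha_mlt (alpha : seq G) (m n : G) : Prop := gplus alpha (m - n).

Definition alpha_slt (alpha : seq G) (A B : G -> R) : Prop :=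
  forall a, supp A a -> exists b, supp B b /\ alpha_mlt alpha a b.

Definition is_mag (T : G -> R) (m : G) : Prop :=
  supp T m /\ forall g, supp T g -> le g m.

Definition witnesses (alpha : seq G) (T : G -> R) : Prop :=
  exists m, is_mag T m /\ forall g, supp T g -> exists p, gstar alpha p /\ g = m + p.

Definition sub_series (S T : G -> R) : G -> R := fun g => S g - T g.

Definition geom_conv (alpha : seq G) (Ts : nat -> G -> R) (T : G -> R) : Prop :=
  forall j, witnesses alpha (sub_series T (Ts j)) /\
            alpha_slt alpha (sub_series T (Ts j.+1)) (sub_series T (Ts j)).

End Transseries.

(* Let T_j = Phi^j T0 and D_j = T_(j+1) - T_j.  By (b), alpha witnesses every D_j and
   D_(j+1) ≺^alpha D_j, so every monomial in supp D_j is m0 times a product of at least j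
   ratios, m0 being the dominant monomial of D_0.  As the ratios are small, a given
   monomial is such a product only for boundedly many lengths.  Hence every coefficient of
   T_j is eventually constant; the pointwise limit T is grid-based and the limit of an
   alpha-geometrically convergent sequence, so T is in A by (c).  Finally
   Phi T - T_(j+1) ≺^alpha T - T_j, so supp (Phi T - T) would contain monomials of
   arbitrary depth: Phi T = T. *)

From mathcomp Require Import all_boot all_order all_algebra.
From mathcomp Require Import reals zify.
From Stdlib Require Import Classical ClassicalEpsilon FunctionalExtensionality.
Set Implicit Arguments. Unset Strict Implicit. Unset Printing Implicit Defensive.
Import Order.TTheory GRing.Theory Num.Theory.

Lemma common_bound (T : eqType) (P : T -> nat -> Prop) (s : seq T) :
  (forall x m n, m <= n -> P x m -> P x n) ->
  (forall x, x \in s -> exists n, P x n) -> exists n, forall x, x \in s -> P x n.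
Proof.
move=> Pmono; elim: s => [|a s IH] hs; first by exists 0.
have [na Pa] := hs a (mem_head _ _).
have [ns Ps] : exists n, forall x, x \in s -> P x n.
  by apply: IH => x xs; apply: hs; rewrite inE xs orbT.
exists (maxn na ns) => x; rewrite inE => /predU1P [-> | xs].
  by apply: Pmono Pa; rewrite leq_maxl.
by apply: Pmono (Ps x xs); rewrite leq_maxr.
Qed.

Lemma size_filter_predC1 (T : eqType) (a : T) (s : seq T) :
  a \in s -> size (filter (predC1 a) s) < size s.
Proof.
move=> as_; rewrite size_filter -(count_predC (pred1 a) s) -add1n leq_add2r.
by rewrite -has_pred1 has_count in as_.
Qed.

Local Open Scope ring_scope.

Section SmallMonomials.
Variables (G : zmodType) (le : rel G).
Hypothesis Hog : ordered_group le.

Lemma addr_le0 x y : le x 0 -> le y 0 -> le (x + y) 0.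
Proof.
move=> hx hy; apply: (og_trans Hog) hy.
by have := og_add Hog y hx; rewrite add0r.
Qed.

Lemma addr_mlt0 x y : mlt le x 0 -> le y 0 -> mlt le (x + y) 0.
Proof.
case/andP=> hx nx hy; rewrite /mlt addr_le0 //=; apply/eqP => e.
have : le 0 x by have := og_add Hog x hy; rewrite addrC e add0r.
by move=> h; move/eqP: nx; apply; apply: (og_anti Hog).
Qed.

Lemma gstar_le0 (a : seq G) p : all (small le) a -> gstar a p -> le p 0.
Proof.
move=> ha [k [ak ->]]; elim: k ak => [|x k IH] /=; first by rewrite big_nil (og_refl Hog).
case/andP=> xa ak; rewrite big_cons addr_le0 ?IH //.
by have /andP [] := allP ha x xa.
Qed.

Lemma gplus_mlt0 (a : seq G) p : all (small le) a -> gplus a p -> mlt le p 0.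
Proof.
move=> ha [[|x k] [//= _ [/andP [xa ak] ->]]].
rewrite big_cons addr_mlt0 //; first exact: (allP ha).
by apply: (gstar_le0 ha); exists k.
Qed.

Lemma gplus_neq0 (a : seq G) p : all (small le) a -> gplus a p -> p != 0.
Proof. by move=> ha /(gplus_mlt0 ha) /andP []. Qed.

Lemma sum_small_eq0 (w : seq G) : all (small le) w -> \sum_(x <- w) x = 0 -> w = [::].
Proof.
case: w => // x w hw sw.
have : gplus (x :: w) (\sum_(y <- x :: w) y).
  by exists (x :: w); split => //; split => //; apply/allP.
by move/(gplus_neq0 hw); rewrite sw eqxx.
Qed.

Lemma size_sum_count_leq (w0 w : seq G) : all (small le) w ->
  (forall x, count_mem x w0 <= count_mem x w)%N ->
  \sum_(x <- w0) x = \sum_(x <- w) x -> size w = size w0.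
Proof.
elim: w0 w => [|x w0 IH] w hw hcount.
  by rewrite big_nil => /esym /(sum_small_eq0 hw) ->.
have xw : x \in w by rewrite -has_pred1 has_count; have := hcount x; rewrite /= eqxx; lia.
have remw := perm_to_rem xw; rewrite (perm_big _ remw) !big_cons => /addrI sw.
rewrite (perm_size remw) /= (IH _ _ _ sw) //.
  by apply/allP => y /mem_rem; apply: (allP hw).
by move=> y; rewrite count_mem_rem; have := hcount y; rewrite /=; lia.
Qed.

(* Fix a word w0 of sum p.  A word of sum p using every letter at least as often as w0
   has the size of w0; any other word uses some letter a fewer times than w0, and
   deleting its a's leaves a word over F \ {a}. *)
Lemma word_size_bounded_rec (F : seq G) p : all (small le) F ->
  (forall a q, a \in F -> exists K, forall w, all (fun x => x \in filter (predC1 a) F) w ->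
     \sum_(x <- w) x = q -> (size w < K)%N) ->
  exists K, forall w, all (fun x => x \in F) w -> \sum_(x <- w) x = p -> (size w < K)%N.
Proof.
move=> smallF IH.
have [[w0 [w0F sw0]]|nw] := classic (exists w0, all (fun x => x \in F) w0 /\ \sum_(x <- w0) x = p);
  last by exists 0%N => w wF sw; case: nw; exists w.
have [K HK] : exists K, forall a, a \in F -> forall c, (c < count_mem a w0)%N ->
    forall w, all (fun x => x \in filter (predC1 a) F) w -> \sum_(x <- w) x = p - a *+ c ->
    (c + size w < K)%N.
  apply: common_bound => [a m k mk Pm c hc w wF sw|a aF]; first exact: leq_trans (Pm c hc w wF sw) mk.
  have [K HK] : exists K, forall c, c \in iota 0 (count_mem a w0) ->
      forall w, all (fun x => x \in filter (predC1 a) F) w -> \sum_(x <- w) x = p - a *+ c ->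
      (c + size w < K)%N.
    apply: common_bound => [c m k mk Pm w wF sw|c _]; first exact: leq_trans (Pm w wF sw) mk.
    have [K HK] := IH a (p - a *+ c) aF.
    by exists (c + K)%N => w wF sw; rewrite ltn_add2l; apply: HK.
  by exists K => c hc; apply: HK; rewrite mem_iota.
exists (maxn (size w0).+1 K) => w wF sw.
have [ge_count|not_ge] := classic (forall a, a \in F -> (count_mem a w0 <= count_mem a w)%N).
  rewrite (size_sum_count_leq (w0 := w0)) ?leq_max ?leqnn //; last by rewrite sw sw0.
    by apply/allP => x /(allP wF) /(allP smallF).
  move=> a; have [aF|aF] := boolP (a \in F); first exact: ge_count.
  by rewrite (count_memPn _) //; apply: contra aF => /(allP w0F).
have [a aF lt_count] : exists2 a, a \in F & (count_mem a w < count_mem a w0)%N.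
  apply: NNPP => not_lt; apply: not_ge => a aF; rewrite leqNgt; apply/negP => lt_count.
  by apply: not_lt; exists a.
set w' := filter (predC1 a) w.
have sizew : size w = (count_mem a w + size w')%N by rewrite size_filter count_predC.
have sumw : \sum_(x <- w) x = a *+ count_mem a w + \sum_(x <- w') x.
  rewrite big_filter (bigID (pred1 a)) /=; congr (_ + _).
  by rewrite (eq_bigr (fun=> a)) => [|x /eqP //]; rewrite big_const_seq iter_addr_0.
rewrite sizew leq_max (HK a aF _ lt_count w') ?orbT //; last by rewrite -sw sumw addrC addKr.
by apply/allP => x; rewrite !mem_filter => /andP [-> /(allP wF)].
Qed.

Lemma word_size_bounded (F : seq G) p : all (small le) F ->
  exists K, forall w, all (fun x => x \in F) w -> \sum_(x <- w) x = p -> (size w < K)%N.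
Proof.
have [n] := ubnP (size F); elim: n => // n IH in F p *; rewrite ltnS => sF smallF.
apply: word_size_bounded_rec => // a q aF; apply: IH.
  by apply: leq_trans sF; apply: size_filter_predC1.
by apply/allP => x; rewrite mem_filter => /andP [_ /(allP smallF)].
Qed.

Lemma gplus_add (a : seq G) p q : gplus a p -> gstar a q -> gplus a (p + q).
Proof.
move=> [k [nk [ak ->]]] [k' [ak' ->]]; exists (k ++ k'); rewrite all_cat ak ak' big_cat.
by split => //; move: nk; rewrite -!size_eq0 size_cat; case: (size k).
Qed.

Lemma gplus_gstar (a : seq G) p : gplus a p -> gstar a p.
Proof. by move=> [k [_ h]]; exists k. Qed.

Lemma gstar_catl (a b : seq G) p : gstar a p -> gstar (a ++ b) p.
Proof.
move=> [k [ak ->]]; exists k; split => //; apply/allP => x /(allP ak).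
by rewrite mem_cat => ->.
Qed.

Lemma gstar_catr (a b : seq G) p : gstar b p -> gstar (a ++ b) p.
Proof.
move=> [k [ak ->]]; exists k; split => //; apply/allP => x /(allP ak).
by rewrite mem_cat orbC => ->.
Qed.

Lemma witnessesP (R : realType) (alpha : seq G) (T : G -> R) : ratio_set le alpha ->
  witnesses le alpha T <-> exists m, supp T m /\ forall g, supp T g -> gstar alpha (g - m).
Proof.
move=> Halpha; split => [[m [[Tm _] wT]]|[m [Tm wT]]].
  by exists m; split => // g /wT [p [hp ->]]; rewrite addrC addKr.
exists m; split; first split => // g /wT /(gstar_le0 Halpha) /(og_add Hog m).
  by rewrite subrK add0r.
by move=> g /wT hg; exists (g - m); rewrite addrCA subrr addr0.
Qed.

End SmallMonomials.

Section GeometricLimit.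
Variables (G : zmodType) (le : rel G) (R : realType).
Hypothesis Hog : ordered_group le.
Variable alpha : seq G.
Hypothesis Halpha : ratio_set le alpha.
Variable Ts : nat -> G -> R.
Local Notation D j := (sub_series (Ts j.+1) (Ts j)).
Hypothesis sD : forall j, alpha_slt alpha (D j.+1) (D j).
Variable m0 : G.
Hypothesis Hm0 : forall g, supp (D 0) g -> gstar alpha (g - m0).

Definition deep (j : nat) (g : G) : Prop :=
  exists k, [/\ all (fun x => x \in alpha) k, (j <= size k)%N & g = m0 + \sum_(x <- k) x].

Lemma deep_leq i j g : (i <= j)%N -> deep j g -> deep i g.
Proof. by move=> ij [k [ak jk ->]]; exists k; split => //; apply: leq_trans jk. Qed.

Lemma deep_gplus j g h : deep j g -> gplus alpha (h - g) -> deep j.+1 h.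
Proof.
move=> [k [ak jk ->]] [k' [nk' [ak' e]]]; exists (k ++ k').
rewrite all_cat ak ak' size_cat big_cat /= addrA -e addrCA subrr addr0.
split => //; have : (0 < size k')%N by rewrite lt0n size_eq0.
by move=> k0; rewrite -addn1 leq_add.
Qed.

Lemma supp_D_deep j g : supp (D j) g -> deep j g.
Proof.
elim: j g => [|j IH] g hg.
  have [k [ak e]] := Hm0 hg; exists k; split => //.
  by rewrite -e addrCA subrr addr0.
have [b [hb hgb]] := sD hg.
exact: deep_gplus (IH b hb) hgb.
Qed.

Lemma deep_bounded g : exists K, ~ deep K g.
Proof.
have [K HK] := word_size_bounded Hog (g - m0) Halpha.
exists K => -[k [ak Kk e]].
by have := HK k ak; rewrite e addrC addKr => /(_ erefl); rewrite ltnNge Kk.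
Qed.

Lemma D_eventually0 g : exists N, forall i, (N <= i)%N -> D i g = 0.
Proof.
have [K notK] := deep_bounded g; exists K => i Ki; apply: NNPP => nz; apply: notK.
exact/(deep_leq Ki)/supp_D_deep/eqP.
Qed.

Definition stab_index (g : G) : nat :=
  proj1_sig (constructive_indefinite_description _ (D_eventually0 g)).

Definition glim (g : G) : R := Ts (stab_index g) g.

Lemma Ts_constant_from j g : (forall i, (j <= i)%N -> D i g = 0) ->
  forall i, (j <= i)%N -> Ts i g = Ts j g.
Proof.
move=> D0; elim=> [|i IH] ji; first by move: ji; rewrite leqn0 => /eqP ->.
have [->|ne] := eqVneq j i.+1; first by [].
have ji' : (j <= i)%N by move: ji; rewrite leq_eqVlt (negbTE ne).
by rewrite (subr0_eq (D0 i ji')) IH.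
Qed.

Lemma glimE j g : (forall i, (j <= i)%N -> D i g = 0) -> glim g = Ts j g.
Proof.
move=> D0; have N0 := proj2_sig (constructive_indefinite_description _ (D_eventually0 g)).
rewrite /glim -(Ts_constant_from N0 (leq_maxr j (stab_index g))).
by rewrite (Ts_constant_from D0 (leq_maxl j (stab_index g))).
Qed.

Lemma supp_glim_sub j g : supp (sub_series glim (Ts j)) g -> exists2 i, (j <= i)%N & supp (D i) g.
Proof.
move=> hg; apply: NNPP => none; move/eqP: hg; apply.
rewrite /sub_series (@glimE j) ?subrr // => i ji; apply: NNPP => nz.
by apply: none; exists i => //; apply/eqP.
Qed.

Lemma deep_glim_sub j g : supp (sub_series glim (Ts j)) g -> deep j g.
Proof. by case/supp_glim_sub => i ji /supp_D_deep /(deep_leq ji). Qed.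

Lemma gplus_D_later j m : (forall h, supp (D j) h -> gstar alpha (h - m)) ->
  forall i g, (j < i)%N -> supp (D i) g -> gplus alpha (g - m).
Proof.
move=> Dj; elim=> // i IH g ji /sD [b [hb gb]].
have -> : g - m = (g - b) + (b - m) by rewrite addrA subrK.
apply: gplus_add gb _; have [ji'|ne] := eqVneq j i; first by apply: Dj; rewrite ji'.
by apply/gplus_gstar/IH => //; rewrite ltn_neqAle ne -ltnS.
Qed.

Hypothesis wD : forall j, witnesses le alpha (D j).

Lemma glim_sub_mag j : exists m, [/\ supp (sub_series glim (Ts j)) m,
  forall g, supp (sub_series glim (Ts j)) g -> gstar alpha (g - m) &
  forall g, supp (sub_series glim (Ts j.+1)) g -> gplus alpha (g - m)].
Proof.
have [m [Djm Dj]] := (witnessesP Hog _ Halpha).1 (wD j).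
have later := gplus_D_later Dj.
have glim_m : glim m = Ts j.+1 m.
  apply: glimE => i ji; apply: NNPP => /eqP nz.
  by have := gplus_neq0 Hog Halpha (later i m ji nz); rewrite subrr eqxx.
exists m; split; first by rewrite /supp /sub_series glim_m.
  move=> g /supp_glim_sub [i]; rewrite leq_eqVlt => /predU1P [<- /Dj //|ji].
  by move/(later _ _ ji)/gplus_gstar.
by move=> g /supp_glim_sub [i ji]; apply: later.
Qed.

Lemma witnesses_glim_sub j : witnesses le alpha (sub_series glim (Ts j)).
Proof.
by apply/(witnessesP Hog _ Halpha); have [m [hm hg _]] := glim_sub_mag j; exists m.
Qed.

Lemma geom_conv_glim : geom_conv le alpha Ts glim.
Proof.
move=> j; split; first exact: witnesses_glim_sub.
have [m [hm _ later]] := glim_sub_mag j.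
by move=> g /later gm; exists m.
Qed.

Lemma grid_based_glim : grid_based le (Ts 0) -> grid_based le glim.
Proof.
move=> [J [mu [smu grid0]]]; exists (m0 :: J), (alpha ++ mu).
split=> [|g hg]; first by rewrite all_cat Halpha smu.
have [e|ne] := eqVneq (glim g) (Ts 0 g).
  have /grid0 [j [jJ [p [hp ->]]]] : supp (Ts 0) g by rewrite /supp -e.
  by exists j; split; [rewrite inE jJ orbT | exists p; split => //; apply: gstar_catr].
have /deep_glim_sub [k [ak _ ->]] : supp (sub_series glim (Ts 0)) g.
  by rewrite /supp /sub_series subr_eq0.
exists m0; split; first exact: mem_head.
by exists (\sum_(x <- k) x); split => //; apply: gstar_catl; exists k.
Qed.

Lemma glim_unique U :
  (forall j, alpha_slt alpha (sub_series U (Ts j.+1)) (sub_series glim (Ts j))) -> U = glim.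
Proof.
move=> slt; apply: functional_extensionality => g; apply: NNPP => ne.
have deep_all j : deep j.+1 g.
  have [glim_g|] := eqVneq (glim g) (Ts j.+1 g); last first.
    by move=> nz; apply: deep_glim_sub; rewrite /supp /sub_series subr_eq0.
  have [b [hb gb]] : exists b, supp (sub_series glim (Ts j)) b /\ alpha_mlt alpha g b.
    by apply: slt; rewrite /supp /sub_series -glim_g subr_eq0; apply/eqP.
  exact: deep_gplus (deep_glim_sub hb) gb.
have [K notK] := deep_bounded g.
exact/notK/(deep_leq (leqnSn K)).
Qed.

End GeometricLimit.

Theorem proposition6p1 (G : zmodType) (le : rel G) (R : realType)
  (Hog : ordered_group le)
  (A : (G -> R) -> Prop) (HA : forall S, A S -> transseries le S)
  (Phi : (G -> R) -> (G -> R)) (HPhi : forall S, A S -> A (Phi S))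
  (alpha : seq G) (Halpha : ratio_set le alpha)
  (Ha : forall S, A S -> witnesses le alpha S -> witnesses le alpha (Phi S))
  (Hb : forall S T, A S -> A T -> witnesses le alpha (sub_series S T) ->
          witnesses le alpha (sub_series (Phi S) (Phi T)) /\
          alpha_slt alpha (sub_series (Phi S) (Phi T)) (sub_series S T))
  (Hc : forall (Ts : nat -> G -> R) (T : G -> R), (forall j, A (Ts j)) ->
          transseries le T -> geom_conv le alpha Ts T -> A T)
  (Hd : exists T0, A T0 /\ witnesses le alpha T0 /\
          witnesses le alpha (sub_series (Phi T0) T0)) :
  exists S, A S /\ S = Phi S.
Proof.
have [T0 [AT0 [_ wD0]]] := Hd.
pose Ts j := iter j Phi T0.
have ATs j : A (Ts j) by elim: j => //= j IH; apply: HPhi.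
have wD j : witnesses le alpha (sub_series (Ts j.+1) (Ts j)).
  by elim: j => // j IH; exact: (Hb _ _ (ATs j.+1) (ATs j) IH).1.
have sD j : alpha_slt alpha (sub_series (Ts j.+2) (Ts j.+1)) (sub_series (Ts j.+1) (Ts j)).
  exact: (Hb _ _ (ATs j.+1) (ATs j) (wD j)).2.
have [m0 [_ Hm0]] := (witnessesP Hog _ Halpha).1 (wD 0%N).
have AT : A (glim Hog Halpha sD Hm0).
  apply: (Hc Ts) => //; first exact: grid_based_glim (HA _ AT0).
  exact: (geom_conv_glim Hog Halpha (Ts := Ts) sD Hm0 wD).
eexists; split; first exact: AT.
apply/esym/glim_unique => j.
exact: (Hb _ _ AT (ATs j) (witnesses_glim_sub Hog Halpha sD Hm0 wD j)).2.
Qed.
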